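(* Assume the setting and hypotheses below, with the constants $c_2>0$ and $\varkappa>0$ independent of $N$ and $M$. Let $l,T>0$, $h=l/N$, $x_i=ih$, and a time mesh $0=t_0<\dots<t_M=T$. For each $j=0,\dots,M-1$ let weights satisfy $g_j^{j+1}>g_{j-1}^{j+1}>\dots>g_0^{j+1}\ge c_2$ and let $\frac{g_j^{j+1}}{2g_j^{j+1}-g_{j-1}^{j+1}}\le\sigma_{j+1}\le1$ (with $g_{-1}^1:=0$); let $\Lambda=\Lambda^{j+1}$ be linear operators on mesh functions vanishing at $x_0,x_N$ with $(-\Lambda y,y)\ge\varkappa\|y\|_0^2$. Let $y$ solve $$\sum_{s=0}^{j}(y_i^{s+1}-y_i^s)g_s^{j+1}=(\Lambda y^{(\sigma_{j+1})})_i+\varphi_i^{j+1}\ (1\le i\le N-1,\ 0\le j\le M-1),\quad y_0^j=y_N^j=0,\quad y_i^0=u_0(x_i),$$ with $y^{(\sigma_{j+1})}=\sigma_{j+1}y^{j+1}+(1-\sigma_{j+1})y^j$. Let $u(x,t)$ be the solution of the differential problem $$\partial_{0t}^\alpha u=\frac{\partial}{\partial x}\Big(k(x,t)\frac{\partial u}{\partial x}\Big)-q(x,t)u+f(x,t),\ 0<x<l,\ 0<t\le T;\quad u(0,t)=u(l,t)=0;\quad u(x,0)=u_0(x),$$ and suppose the scheme has approximation order $\mathcal O(N^{-r_1}+M^{-r_2})$ for some $r_1,r_2>0$, i.e. the truncation error $$\psi_i^{j+1}:=(\Lambda u^{(\sigma_{j+1})})_i-\sum_{s=0}^{j}(u_i^{s+1}-u_i^s)g_s^{j+1}+\varphi_i^{j+1},\qquad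 u_i^j=u(x_i,t_j),$$ satisfies $|\psi_i^{j+1}|\le C(N^{-r_1}+M^{-r_2})$ for all $i,j$ with $C$ independent of $N,M$. Then $\|y^j-u^j\|_0=\mathcal O(N^{-r_1}+M^{-r_2})$ uniformly in $j=0,\dots,M$, i.e. the solution of the scheme converges to $u$ in the mesh $L_2$-norm with the rate of the approximation error.
   Context: $(y,v)=\sum_{i=1}^{N-1}y_iv_ih$, $\|y\|_0^2=(y,y)$. The Caputo derivative of order $\alpha\in(0,1)$ is $\partial_{0t}^\alpha u(x,t)=\frac{1}{\Gamma(1-\alpha)}\int_0^t \partial_\eta u(x,\eta)(t-\eta)^{-\alpha}d\eta$. Here $k\ge c_1>0$, $q\ge0$, $f$ are sufficiently smooth functions. *)

From Stdlib Require Import Reals Lra Lia.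
From Coquelicot Require Import Coquelicot.
Open Scope R_scope.

Fixpoint sumR (f : nat -> R) (n : nat) : R :=
  match n with
  | O => 0
  | S m => sumR f m + f m
  end.

(** Mesh functions on the spatial grid x_i = i h, i = 0..N, are [nat -> R]
    (only the indices 0..N matter). *)

Definition mesh_ip (N : nat) (h : R) (y v : nat -> R) : R :=
  sumR (fun i => y (S i) * v (S i) * h) (N - 1).

Definition mesh_norm0 (N : nat) (h : R) (y : nat -> R) : R :=
  sqrt (mesh_ip N h y y).

Definition vanishes_at_ends (N : nat) (y : nat -> R) : Prop :=
  y O = 0 /\ y N = 0.

Definition Gamma_fn (a : R) : R :=
  RInt_gen (fun s => Rpower s (a - 1) * exp (- s))
    (at_right 0) (Rbar_locally p_infty).

Definition caputo_integrand (alpha : R) (u : R -> R -> R) (x t : R) : R -> R :=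
  fun eta => Derive (fun e => u x e) eta * Rpower (t - eta) (- alpha).

Definition caputo (alpha : R) (u : R -> R -> R) (x t : R) : R :=
  / Gamma_fn (1 - alpha) *
  RInt_gen (caputo_integrand alpha u x t) (at_point 0) (at_left t).

Definition solves_fractional_problem (alpha l T : R)
    (k q f : R -> R -> R) (u0 : R -> R) (u : R -> R -> R) : Prop :=
  (forall x t, 0 < x < l -> 0 < t <= T ->
     ex_derive (fun z => u z t) x /\
     ex_derive (fun z => k z t * Derive (fun w => u w t) z) x /\
     ex_RInt_gen (caputo_integrand alpha u x t) (at_point 0) (at_left t) /\
     caputo alpha u x t =
       Derive (fun z => k z t * Derive (fun w => u w t) z) x
       - q x t * u x t + f x t) /\
  (forall t, 0 <= t <= T -> u 0 t = 0 /\ u l t = 0) /\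
  (forall x, 0 <= x <= l -> u x 0 = u0 x).

(** g_{j-1}^{j+1}, with the convention g_{-1}^{1} := 0 *)
Definition g_prev (g : nat -> nat -> R) (j : nat) : R :=
  match j with
  | O => 0
  | S j' => g (S j) j'
  end.

Definition sigma_level (sigma : nat -> R) (y : nat -> nat -> R) (j : nat)
  : nat -> R :=
  fun i => sigma (S j) * y (S j) i + (1 - sigma (S j)) * y j i.

Definition disc_frac (g : nat -> nat -> R) (y : nat -> nat -> R) (j i : nat) : R :=
  sumR (fun s => (y (S s) i - y s i) * g (S j) s) (S j).

From Stdlib Require Import Reals.
From Coquelicot Require Import Coquelicot.
From Stdlib Require Import Lra Lia FunctionalExtensionality.
Open Scope R_scope.

(* The error z = y - u of the scheme solves the same scheme with the truncation
   error psi as right-hand side.  Alikhanov's inequality bounds half the discrete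
   fractional derivative of the energy E^s = ||z^s||_0^2 by (z^(sigma), discrete
   fractional derivative of z); coercivity of -Lambda and Young's inequality then
   give  sum_s g_s^(j+1) (E^(s+1) - E^s) <= l B^2 / (2 kappa)  with B a bound on
   |psi|.  Since the weights increase and g_0 >= c2, Abel summation turns this
   into E^j <= l B^2 / (2 kappa c2) by strong induction on j.  Only the boundary
   and initial values of u are used: the differential equation enters solely
   through the assumed bound on the truncation error. *)

Lemma sumR_ext (f g : nat -> R) (n : nat) :
  (forall i, (i < n)%nat -> f i = g i) -> sumR f n = sumR g n.
Proof.
  induction n as [|n IH]; intros H; simpl; [reflexivity|].
  rewrite IH by (intros; apply H; lia). rewrite H by lia. reflexivity.
Qed.

Lemma sumR_le (f g : nat -> R) (n : nat) :
  (forall i, (i < n)%nat -> f i <= g i) -> sumR f n <= sumR g n.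
Proof.
  induction n as [|n IH]; intros H; simpl; [lra|].
  pose proof (H n ltac:(lia)). pose proof (IH (fun i Hi => H i ltac:(lia))). lra.
Qed.

Lemma sumR_plus (f g : nat -> R) (n : nat) :
  sumR (fun i => f i + g i) n = sumR f n + sumR g n.
Proof. induction n as [|n IH]; simpl; [lra|]. rewrite IH; ring. Qed.

Lemma sumR_minus (f g : nat -> R) (n : nat) :
  sumR (fun i => f i - g i) n = sumR f n - sumR g n.
Proof. induction n as [|n IH]; simpl; [lra|]. rewrite IH; ring. Qed.

Lemma sumR_scal (c : R) (f : nat -> R) (n : nat) :
  sumR (fun i => c * f i) n = c * sumR f n.
Proof. induction n as [|n IH]; simpl; [lra|]. rewrite IH; ring. Qed.

Lemma sumR_const (c : R) (n : nat) : sumR (fun _ => c) n = INR n * c.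
Proof. induction n as [|n IH]; simpl sumR; [simpl; lra|]. rewrite IH, S_INR; ring. Qed.

Lemma sumR_swap (F : nat -> nat -> R) (n m : nat) :
  sumR (fun i => sumR (F i) m) n = sumR (fun s => sumR (fun i => F i s) n) m.
Proof.
  induction n as [|n IH]; simpl.
  - induction m as [|m IHm]; simpl; lra.
  - rewrite IH, <- sumR_plus. reflexivity.
Qed.

Lemma nondecreasing_le (a : nat -> R) (n : nat) :
  (forall s, (s < n)%nat -> a s <= a (S s)) ->
  forall p q, (p <= q)%nat -> (q <= n)%nat -> a p <= a q.
Proof.
  intros Ha p q Hpq. induction Hpq as [|q Hpq IH]; intros Hq; [lra|].
  pose proof (Ha q ltac:(lia)). pose proof (IH ltac:(lia)). lra.
Qed.

Lemma sumR_abel_lower (g phi : nat -> R) (mu : R) (m : nat) :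
  (forall s, (s < m)%nat -> g s <= g (S s)) ->
  (forall s, (1 <= s <= m)%nat -> mu <= phi s) ->
  g O * (phi O - mu) + g m * (mu - phi (S m))
  <= sumR (fun s => g s * (phi s - phi (S s))) (S m).
Proof.
  induction m as [|m IH]; intros Hg Hphi.
  - simpl. lra.
  - change (sumR ?F (S (S m))) with (sumR F (S m) + F (S m)).
    pose proof (IH (fun s Hs => Hg s ltac:(lia)) (fun s Hs => Hphi s ltac:(lia))).
    assert (0 <= (g (S m) - g m) * (phi (S m) - mu)).
    { apply Rmult_le_pos;
        [pose proof (Hg m ltac:(lia)) | pose proof (Hphi (S m) ltac:(lia))]; lra. }
    lra.
Qed.

Definition alikhanov_potential (v : nat -> R) (c : R) (j s : nat) : R :=
  (v (S j) - v s) ^ 2 / 2 - c * (v (S j) - v j) * (v (S j) - v s).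

Lemma alikhanov_defect_telescope (G v : nat -> R) (sig : R) (j : nat) :
  (sig * v (S j) + (1 - sig) * v j) * sumR (fun s => (v (S s) - v s) * G s) (S j)
  - (1/2) * sumR (fun s => G s * (v (S s) ^ 2 - v s ^ 2)) (S j)
  = sumR (fun s => G s * (alikhanov_potential v (1 - sig) j s
                          - alikhanov_potential v (1 - sig) j (S s))) (S j).
Proof.
  rewrite <- !sumR_scal, <- sumR_minus. apply sumR_ext. intros s _.
  unfold alikhanov_potential. field.
Qed.

Lemma alikhanov_potential_lower (v : nat -> R) (c : R) (j s : nat) :
  - (c * (v (S j) - v j)) ^ 2 / 2 <= alikhanov_potential v c j s.
Proof.
  unfold alikhanov_potential.
  pose proof (pow2_ge_0 ((v (S j) - v s) - c * (v (S j) - v j))). nra.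
Qed.

Lemma alikhanov_inequality (g : nat -> nat -> R) (v : nat -> R) (sig : R) (j : nat) :
  0 <= g (S j) O -> (forall s, (s < j)%nat -> g (S j) s <= g (S j) (S s)) ->
  g_prev g j < g (S j) j ->
  g (S j) j / (2 * g (S j) j - g_prev g j) <= sig <= 1 ->
  (1/2) * sumR (fun s => g (S j) s * (v (S s) ^ 2 - v s ^ 2)) (S j)
  <= (sig * v (S j) + (1 - sig) * v j) * sumR (fun s => (v (S s) - v s) * g (S j) s) (S j).
Proof.
  intros Hg0 Hmon Hprev [Hsig1 Hsig2].
  pose proof (alikhanov_defect_telescope (g (S j)) v sig j) as Hdefect.
  set (G := g (S j)) in *. set (gp := g_prev g j) in *.
  set (phi := alikhanov_potential v (1 - sig) j) in *.
  set (w := v (S j) - v j). set (mu := - ((1 - sig) * w) ^ 2 / 2).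
  pose proof (nondecreasing_le G j Hmon O j ltac:(lia) ltac:(lia)).
  assert (Hsd : G j <= sig * (2 * G j - gp)).
  { replace (G j) with (G j / (2 * G j - gp) * (2 * G j - gp)) at 1 by (field; lra).
    apply Rmult_le_compat_r; lra. }
  assert (Hphi : forall s, mu <= phi s) by (intros; apply alikhanov_potential_lower).
  assert (Hphij : phi j = w ^ 2 / 2 - (1 - sig) * w ^ 2)
    by (unfold phi, alikhanov_potential, w; field).
  assert (HphiS : phi (S j) = 0) by (unfold phi, alikhanov_potential; field).
  pose proof (pow2_ge_0 w).
  destruct j as [|j']; unfold gp in Hsd, Hprev; simpl g_prev in Hsd, Hprev.
  - assert (sumR (fun s => G s * (phi s - phi (S s))) 1 = G O * (phi O - phi 1%nat))
      by (simpl; ring).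
    assert (1 / 2 <= sig) by nra.
    assert (0 <= G O * (phi O - phi 1%nat))
      by (rewrite HphiS, Hphij; apply Rmult_le_pos; nra).
    lra.
  - fold G in Hsd, Hprev.
    assert (sumR (fun s => G s * (phi s - phi (S s))) (S (S j'))
            = sumR (fun s => G s * (phi s - phi (S s))) (S j')
              + G (S j') * (phi (S j') - phi (S (S j')))) by reflexivity.
    pose proof (sumR_abel_lower G phi mu j' (fun s Hs => Hmon s ltac:(lia)) (fun s _ => Hphi s)).
    pose proof (nondecreasing_le G (S j') Hmon O j' ltac:(lia) ltac:(lia)).
    (* Abel summation handles all levels but the last; the lower bound on sigma makes
       the last one nonnegative. *)
    assert (G j' * (mu - phi (S j')) + G (S j') * (phi (S j') - phi (S (S j')))
      = (w ^ 2 / 2) * (2 * sig * G (S j') - sig * G j' - G (S j'))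
        + (w ^ 2 / 2) * (G j' * (1 - sig) * sig))
      by (rewrite HphiS, Hphij; unfold mu; field).
    assert (0 <= (w ^ 2 / 2) * (2 * sig * G (S j') - sig * G j' - G (S j')))
      by (apply Rmult_le_pos; nra).
    assert (0 <= (w ^ 2 / 2) * (G j' * (1 - sig) * sig)).
    { apply Rmult_le_pos; [lra|]. apply Rmult_le_pos; [apply Rmult_le_pos|]; nra. }
    assert (0 <= G O * (phi O - mu)) by (pose proof (Hphi O); apply Rmult_le_pos; lra).
    lra.
Qed.

Lemma mesh_ip_alikhanov (N : nat) (h : R) (g : nat -> nat -> R) (sigma : nat -> R)
    (z : nat -> nat -> R) (j : nat) :
  0 <= h -> 0 <= g (S j) O -> (forall s, (s < j)%nat -> g (S j) s <= g (S j) (S s)) ->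
  g_prev g j < g (S j) j ->
  g (S j) j / (2 * g (S j) j - g_prev g j) <= sigma (S j) <= 1 ->
  (1/2) * sumR (fun s => g (S j) s *
                  (mesh_ip N h (z (S s)) (z (S s)) - mesh_ip N h (z s) (z s))) (S j)
  <= mesh_ip N h (sigma_level sigma z j) (disc_frac g z j).
Proof.
  intros Hh Hg0 Hmon Hprev Hsig.
  set (F := fun i s => h * ((1/2) * (g (S j) s * (z (S s) (S i) ^ 2 - z s (S i) ^ 2)))).
  transitivity (sumR (fun i => sumR (F i) (S j)) (N - 1)).
  - right. rewrite sumR_swap, <- sumR_scal. apply sumR_ext. intros s _.
    unfold mesh_ip, F. rewrite <- sumR_minus, <- !sumR_scal.
    apply sumR_ext. intros i _. ring.
  - unfold mesh_ip. apply sumR_le. intros i _.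
    pose proof (alikhanov_inequality g (fun s => z s (S i)) (sigma (S j)) j Hg0 Hmon Hprev Hsig).
    unfold F. rewrite sumR_scal, sumR_scal.
    unfold sigma_level, disc_frac. simpl in *. nra.
Qed.

Lemma mesh_ip_young (N : nat) (h kappa B : R) (z psi : nat -> R) :
  0 <= h -> 0 < kappa -> (forall i, (1 <= i <= N - 1)%nat -> Rabs (psi i) <= B) ->
  mesh_ip N h z psi <= kappa * mesh_ip N h z z + INR (N - 1) * h * B ^ 2 / (4 * kappa).
Proof.
  intros Hh Hkappa Hpsi. unfold mesh_ip.
  replace (INR (N - 1) * h * B ^ 2 / (4 * kappa))
    with (sumR (fun _ => h * B ^ 2 / (4 * kappa)) (N - 1)) by (rewrite sumR_const; field; lra).
  rewrite <- sumR_scal, <- sumR_plus. apply sumR_le. intros i Hi.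
  set (a := z (S i)). set (p := psi (S i)).
  assert (Hp : p ^ 2 <= B ^ 2).
  { pose proof (Hpsi (S i) ltac:(lia)) as HB. fold p in HB.
    pose proof (Rabs_pos p). rewrite <- (pow2_abs p). nra. }
  assert (kappa * (a * a * h) + p ^ 2 * h / (4 * kappa) - a * p * h
          = h / kappa * (kappa * a - p / 2) ^ 2) by (field; lra).
  assert (0 <= h / kappa * (kappa * a - p / 2) ^ 2)
    by (apply Rmult_le_pos; [apply Rdiv_le_0_compat|apply pow2_ge_0]; lra).
  assert (p ^ 2 * h / (4 * kappa) <= B ^ 2 * h / (4 * kappa))
    by (apply Rmult_le_compat_r; [apply Rlt_le, Rinv_0_lt_compat; lra| nra]).
  lra.
Qed.

Lemma weighted_increments_bound (g : nat -> nat -> R) (e : nat -> R) (c D : R) (M : nat) :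
  0 < c -> 0 <= D -> e O = 0 ->
  (forall n, (n < M)%nat -> c <= g n O /\ (forall s, (s < n)%nat -> g n s <= g n (S s))) ->
  (forall n, (n < M)%nat -> sumR (fun s => g n s * (e (S s) - e s)) (S n) <= D) ->
  forall m, (m <= M)%nat -> e m <= D / c.
Proof.
  intros Hc HD He0 Hg Hsum m. induction m as [m IH] using Wf_nat.lt_wf_ind. intros HmM.
  assert (HDc : 0 <= D / c) by (apply Rdiv_le_0_compat; lra).
  destruct m as [|n]; [lra|].
  destruct (Hg n ltac:(lia)) as [Hg0 Hmon].
  pose proof (Hsum n ltac:(lia)) as Hn.
  pose proof (sumR_abel_lower (g n) (fun s => - e s) (- (D / c)) n Hmon
                (fun s Hs => Ropp_le_contravar _ _ (IH s ltac:(lia) ltac:(lia)))) as Habel.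
  rewrite (sumR_ext _ (fun s => g n s * (e (S s) - e s))) in Habel by (intros; ring).
  assert (Hgn : g n O <= g n n) by (apply (nondecreasing_le (g n) n Hmon); lia).
  assert (D <= g n O * (D / c)).
  { replace D with (c * (D / c)) at 1 by (field; lra). apply Rmult_le_compat_r; lra. }
  destruct (Rle_or_lt (e (S n)) (D / c)) as [|Hlt]; [assumption|].
  assert (0 < g n n * (e (S n) - D / c)) by (apply Rmult_lt_0_compat; lra).
  rewrite He0 in Habel. lra.
Qed.

Lemma increasing_mesh_range (t : nat -> R) (M : nat) (T : R) :
  t O = 0 -> t M = T -> (forall j, (j < M)%nat -> t j < t (S j)) ->
  forall s, (s <= M)%nat -> 0 <= t s <= T.
Proof.
  intros Ht0 HtM Hinc s Hs.
  assert (Hmon : forall j, (j < M)%nat -> t j <= t (S j)) by (intros; apply Rlt_le, Hinc; lia).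
  rewrite <- Ht0, <- HtM. split; apply (nondecreasing_le t M Hmon); lia.
Qed.

Lemma grid_point_range (N i : nat) (h l : R) :
  0 < h -> INR N * h = l -> (i <= N)%nat -> 0 <= INR i * h <= l.
Proof.
  intros Hh HNh Hi. rewrite <- HNh. split.
  - apply Rmult_le_pos; [apply pos_INR|lra].
  - apply Rmult_le_compat_r; [lra|apply le_INR, Hi].
Qed.

Lemma sigma_level_vanishes (N : nat) (sigma : nat -> R) (y : nat -> nat -> R) (n : nat) :
  vanishes_at_ends N (y n) -> vanishes_at_ends N (y (S n)) ->
  vanishes_at_ends N (sigma_level sigma y n).
Proof.
  unfold vanishes_at_ends, sigma_level. intros [-> ->] [-> ->]. split; ring.
Qed.

Lemma sqrt_le_mul_Rabs (x a B : R) : 0 <= a -> x <= a * B ^ 2 -> sqrt x <= sqrt a * Rabs B.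
Proof.
  intros Ha Hx. rewrite <- sqrt_Rsqr_abs, <- sqrt_mult_alt by exact Ha.
  apply sqrt_le_1_alt. unfold Rsqr. lra.
Qed.

Section ErrorStability.

Variables (N M : nat) (h l kappa c2 : R).
Variables (g : nat -> nat -> R) (sigma : nat -> R) (Lambda : nat -> (nat -> R) -> nat -> R).

Hypothesis Hh : 0 < h.
Hypothesis HNh : INR N * h = l.
Hypothesis Hkappa : 0 < kappa.
Hypothesis Hc2 : 0 < c2.
Hypothesis Hweights : forall j, (j < M)%nat ->
  c2 <= g (S j) O /\ (forall s, (s < j)%nat -> g (S j) s < g (S j) (S s)).
Hypothesis Hsigma : forall j, (j < M)%nat ->
  g (S j) j / (2 * g (S j) j - g_prev g j) <= sigma (S j) <= 1.
Hypothesis Hlinear : forall j, (j < M)%nat -> forall (a b : R) (z w : nat -> R),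
  vanishes_at_ends N z -> vanishes_at_ends N w ->
  forall i, Lambda (S j) (fun m => a * z m + b * w m) i
            = a * Lambda (S j) z i + b * Lambda (S j) w i.
Hypothesis Hcoercive : forall j, (j < M)%nat -> forall z, vanishes_at_ends N z ->
  kappa * mesh_ip N h z z <= - mesh_ip N h (Lambda (S j) z) z.

Lemma weights_nondecreasing (n : nat) :
  (n < M)%nat -> forall s, (s < n)%nat -> g (S n) s <= g (S n) (S s).
Proof. intros Hn s Hs. apply Rlt_le, (proj2 (Hweights n Hn)), Hs. Qed.

Lemma g_prev_lt (n : nat) : (n < M)%nat -> g_prev g n < g (S n) n.
Proof.
  intros Hn. destruct (Hweights n Hn) as [Hg0 Hmon].
  destruct n as [|n]; simpl; [lra|]. apply Hmon. lia.
Qed.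

Lemma error_equation (y u : nat -> nat -> R) (phi : nat -> R) (n i : nat) :
  (n < M)%nat ->
  vanishes_at_ends N (sigma_level sigma y n) -> vanishes_at_ends N (sigma_level sigma u n) ->
  disc_frac g y n i = Lambda (S n) (sigma_level sigma y n) i + phi i ->
  disc_frac g (fun s m => y s m - u s m) n i
  = Lambda (S n) (sigma_level sigma (fun s m => y s m - u s m) n) i
    + (Lambda (S n) (sigma_level sigma u n) i - disc_frac g u n i + phi i).
Proof.
  intros Hn Hy Hu Hscheme.
  assert (Hlevel : sigma_level sigma (fun s m => y s m - u s m) n
                   = fun m => 1 * sigma_level sigma y n m + (-1) * sigma_level sigma u n m).
  { apply functional_extensionality. intros m. unfold sigma_level. ring. }
  assert (Hdisc : disc_frac g (fun s m => y s m - u s m) n i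
                  = disc_frac g y n i - disc_frac g u n i).
  { unfold disc_frac. rewrite <- sumR_minus. apply sumR_ext. intros. ring. }
  rewrite Hdisc, Hlevel, Hlinear, Hscheme by assumption. ring.
Qed.

Lemma energy_step (z : nat -> nat -> R) (psi : nat -> R) (B : R) (n : nat) :
  (n < M)%nat -> vanishes_at_ends N (sigma_level sigma z n) ->
  (forall i, (1 <= i <= N - 1)%nat ->
     disc_frac g z n i = Lambda (S n) (sigma_level sigma z n) i + psi i) ->
  (forall i, (1 <= i <= N - 1)%nat -> Rabs (psi i) <= B) ->
  sumR (fun s => g (S n) s *
          (mesh_ip N h (z (S s)) (z (S s)) - mesh_ip N h (z s) (z s))) (S n)
  <= l * B ^ 2 / (2 * kappa).
Proof.
  intros Hn Hvan Heq Hpsi. set (zs := sigma_level sigma z n) in *.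
  destruct (Hweights n Hn) as [Hg0 _].
  pose proof (mesh_ip_alikhanov N h g sigma z n (Rlt_le _ _ Hh) ltac:(lra)
                (weights_nondecreasing n Hn) (g_prev_lt n Hn) (Hsigma n Hn)) as Halik.
  fold zs in Halik.
  assert (mesh_ip N h zs (disc_frac g z n)
          = mesh_ip N h (Lambda (S n) zs) zs + mesh_ip N h zs psi).
  { unfold mesh_ip. rewrite <- sumR_plus. apply sumR_ext. intros i Hi.
    rewrite Heq by lia. ring. }
  pose proof (mesh_ip_young N h kappa B zs psi (Rlt_le _ _ Hh) Hkappa Hpsi).
  pose proof (Hcoercive n Hn zs Hvan).
  assert (INR (N - 1) * h * B ^ 2 / (4 * kappa) <= l * B ^ 2 / (4 * kappa)).
  { rewrite <- HNh. apply Rmult_le_compat_r; [apply Rlt_le, Rinv_0_lt_compat; lra|].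
    apply Rmult_le_compat_r; [apply pow2_ge_0|].
    apply Rmult_le_compat_r; [lra|]. apply le_INR. lia. }
  assert (l * B ^ 2 / (2 * kappa) = 2 * (l * B ^ 2 / (4 * kappa))) by (field; lra).
  lra.
Qed.

Lemma scheme_stability (z psi : nat -> nat -> R) (B : R) :
  (forall s, (s <= M)%nat -> vanishes_at_ends N (z s)) ->
  (forall i, (i <= N)%nat -> z O i = 0) ->
  (forall n i, (n < M)%nat -> (1 <= i <= N - 1)%nat ->
     disc_frac g z n i = Lambda (S n) (sigma_level sigma z n) i + psi n i) ->
  (forall n i, (n < M)%nat -> (1 <= i <= N - 1)%nat -> Rabs (psi n i) <= B) ->
  forall j, (j <= M)%nat -> mesh_ip N h (z j) (z j) <= l * B ^ 2 / (2 * kappa) / c2.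
Proof.
  intros Hvan Hz0 Heq Hpsi.
  apply (weighted_increments_bound (fun n => g (S n)) (fun s => mesh_ip N h (z s) (z s))).
  - exact Hc2.
  - rewrite <- HNh. apply Rdiv_le_0_compat; [|lra].
    apply Rmult_le_pos; [apply Rmult_le_pos; [apply pos_INR|lra]|apply pow2_ge_0].
  - unfold mesh_ip. rewrite (sumR_ext _ (fun _ => 0)), sumR_const; [ring|].
    intros i Hi. rewrite Hz0 by lia. ring.
  - intros n Hn. split; [apply Hweights, Hn|apply weights_nondecreasing, Hn].
  - intros n Hn. apply (energy_step z (psi n) B n Hn).
    + apply sigma_level_vanishes; apply Hvan; lia.
    + intros i Hi. apply Heq; assumption.
    + intros i Hi. apply Hpsi; assumption.
Qed.

End ErrorStability.

Theorem theorem2 :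
  forall (alpha l T c1 : R) (k q f : R -> R -> R) (u0 : R -> R) (u : R -> R -> R),
    0 < alpha < 1 -> 0 < l -> 0 < T -> 0 < c1 ->
    (forall x t, 0 <= x <= l -> 0 <= t <= T -> c1 <= k x t) ->
    (forall x t, 0 <= x <= l -> 0 <= t <= T -> 0 <= q x t) ->
    solves_fractional_problem alpha l T k q f u0 u ->
  forall (c2 kappa C r1 r2 : R),
    0 < c2 -> 0 < kappa -> 0 < r1 -> 0 < r2 ->
  exists K : R, 0 < K /\
  forall (N M : nat) (t : nat -> R) (g : nat -> nat -> R) (sigma : nat -> R)
         (Lambda : nat -> (nat -> R) -> (nat -> R))
         (phi : nat -> nat -> R) (y : nat -> nat -> R),
    (0 < N)%nat -> (0 < M)%nat ->
    let h := l / INR N in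
    (* time mesh 0 = t_0 < ... < t_M = T *)
    t O = 0 -> t M = T -> (forall j, (j < M)%nat -> t j < t (S j)) ->
    (* weights: g_j^{j+1} > g_{j-1}^{j+1} > ... > g_0^{j+1} >= c2 *)
    (forall j, (j < M)%nat ->
       c2 <= g (S j) O /\ (forall s, (s < j)%nat -> g (S j) s < g (S j) (S s))) ->
    (* g_j/(2 g_j - g_{j-1}) <= sigma_{j+1} <= 1 *)
    (forall j, (j < M)%nat ->
       g (S j) j / (2 * g (S j) j - g_prev g j) <= sigma (S j) <= 1) ->
    (* Lambda^{j+1}: linear operators on mesh functions vanishing at x_0, x_N *)
    (forall j, (j < M)%nat -> forall (a b : R) (z w : nat -> R),
       vanishes_at_ends N z -> vanishes_at_ends N w ->
       forall i, Lambda (S j) (fun m => a * z m + b * w m) i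
                 = a * Lambda (S j) z i + b * Lambda (S j) w i) ->
    (forall j, (j < M)%nat -> forall z : nat -> R, vanishes_at_ends N z ->
       kappa * mesh_ip N h z z <= - mesh_ip N h (Lambda (S j) z) z) ->
    (* the difference scheme *)
    (forall j i, (j < M)%nat -> (1 <= i <= N - 1)%nat ->
       disc_frac g y j i = Lambda (S j) (sigma_level sigma y j) i + phi (S j) i) ->
    (forall j, (j <= M)%nat -> y j O = 0 /\ y j N = 0) ->
    (forall i, (i <= N)%nat -> y O i = u0 (INR i * h)) ->
    (* approximation order O(N^{-r1} + M^{-r2}) of the truncation error *)
    (let uu := fun j i => u (INR i * h) (t j) in
     forall j i, (j < M)%nat -> (1 <= i <= N - 1)%nat ->
       Rabs (Lambda (S j) (sigma_level sigma uu j) i - disc_frac g uu j i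
             + phi (S j) i)
       <= C * (Rpower (INR N) (- r1) + Rpower (INR M) (- r2))) ->
    (* convergence with the same rate, uniformly in j *)
    forall j, (j <= M)%nat ->
      mesh_norm0 N h (fun i => y j i - u (INR i * h) (t j))
      <= K * (Rpower (INR N) (- r1) + Rpower (INR M) (- r2)).
Proof.
  intros alpha l T c1 k q f u0 u _ Hl _ _ _ _ [_ [Hbc Hic]] c2 kappa C r1 r2 Hc2 Hkappa _ _.
  pose proof (sqrt_pos (l / (2 * kappa * c2))). pose proof (Rabs_pos C).
  exists (sqrt (l / (2 * kappa * c2)) * Rabs C + 1). split; [nra|].
  intros N M t g sigma Lambda phi y HN _ h Ht0 HtM Hinc Hg Hsig Hlin Hcoer Hscheme Hy Hinit
    Happrox j Hj.
  set (rate := Rpower (INR N) (- r1) + Rpower (INR M) (- r2)) in *.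
  assert (Hrate : 0 < rate).
  { unfold rate, Rpower. pose proof (exp_pos (- r1 * ln (INR N))).
    pose proof (exp_pos (- r2 * ln (INR M))). lra. }
  assert (Hh : 0 < h) by (unfold h; apply Rdiv_lt_0_compat; [lra|apply lt_0_INR; lia]).
  assert (HNh : INR N * h = l) by (unfold h; field; apply not_0_INR; lia).
  pose proof (increasing_mesh_range t M T Ht0 HtM Hinc) as Ht.
  set (uu := fun s i => u (INR i * h) (t s)) in Happrox.
  assert (Huu : forall s, (s <= M)%nat -> vanishes_at_ends N (uu s)).
  { intros s Hs. unfold vanishes_at_ends, uu. rewrite HNh, Rmult_0_l. apply Hbc, Ht, Hs. }
  unfold mesh_norm0. apply Rle_trans with (sqrt (l / (2 * kappa * c2)) * Rabs (C * rate)).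
  - apply sqrt_le_mul_Rabs; [apply Rdiv_le_0_compat; nra|].
    replace (l / (2 * kappa * c2) * (C * rate) ^ 2)
      with (l * (C * rate) ^ 2 / (2 * kappa) / c2) by (field; lra).
    apply (scheme_stability N M h l kappa c2 g sigma Lambda Hh HNh Hkappa Hc2 Hg Hsig Hcoer
             (fun s i => y s i - uu s i)
             (fun n i => Lambda (S n) (sigma_level sigma uu n) i - disc_frac g uu n i + phi (S n) i));
      [intros s Hs|intros i Hi|intros n i Hn Hi|exact Happrox|exact Hj].
    + destruct (Hy s Hs), (Huu s Hs). split; cbv beta; lra.
    + cbv beta. unfold uu.
      rewrite Hinit, Ht0, Hic by (lia || apply (grid_point_range N); auto). ring.
    + apply (error_equation N M); auto; apply sigma_level_vanishes;
        (apply Hy || apply Huu); lia.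
  - rewrite Rabs_mult, (Rabs_pos_eq rate) by lra. nra.
Qed.
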